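(* Let $\mathcal{L}=(\mathrm{Fm},\vdash)$ be a selfextensional logic for which properties $\neg_S$ and $\neg_A$ hold, and let $N\subseteq\mathrm{Fm}\times\mathrm{Fm}$ be a normative system closed under (WO). Then $$P_N=\{(\alpha,\varphi)\mid(\alpha,\neg\varphi)\notin N\}.$$
   Context: A logic is $\mathcal{L}=(\mathrm{Fm},\vdash)$ with $\mathrm{Fm}$ a formula algebra over propositional variables and $\vdash\subseteq\mathcal{P}(\mathrm{Fm})\times\mathrm{Fm}$ a consequence relation (reflexive, monotone, cut). $Cn(\Gamma)=\{\psi\mid\Gamma\vdash\psi\}$, $Cn(\varphi,\psi)=Cn(\{\varphi,\psi\})$, $\varphi\vdash\psi$ means $\{\varphi\}\vdash\psi$. $\mathcal{L}$ is selfextensional if whenever $\varphi\vdash\psi$ and $\psi\vdash\varphi$, then $\delta(\varphi/p)$ and $\delta(\psi/p)$ are interderivable for every formula $\delta$ and variable $p$. Property $\neg_W$: there is a unary term $\neg$ such that $\psi\in Cn(\varphi)$ implies $\neg\varphi\in Cn(\neg\psi)$; for such $\neg$: $\neg_A$: $Cn(\varphi,\neg\varphi)=\mathrm{Fm}$ for all $\varphi$; $\neg_S$: $Cn(\varphi,\psi)=\mathrm{Fm}$ implies $\neg\psi\in Cn(\varphi)$. A normative system is any $N\subseteq\mathrm{Fm}\times\mathrm{Fm}$; it is closed under (WO) if $(\alpha,\varphi)\in N$ and $\varphi\vdash\psi$ imply $(\alpha,\psi)\in N$. The negative permission system is $P_N=\{(\alpha,\varphi)\mid\forall\psi((\alpha,\psi)\in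 N\Rightarrow Cn(\varphi,\psi)\neq\mathrm{Fm})\}$. *)

From Stdlib Require Import PeanoNat Fin.
Set Implicit Arguments.

Inductive Fm (Op : Type) (ar : Op -> nat) : Type :=
| var : nat -> Fm ar
| app : forall o : Op, (Fin.t (ar o) -> Fm ar) -> Fm ar.
Arguments var {Op ar} _.
Arguments app {Op ar} o _.

Fixpoint fsubst {Op : Type} {ar : Op -> nat} (phi : Fm ar) (p : nat) (delta : Fm ar)
  : Fm ar :=
  match delta with
  | var x => if Nat.eqb x p then phi else var x
  | app o args => app o (fun i => fsubst phi p (args i))
  end.

Section Logic.
Context {Op : Type} {ar : Op -> nat}.
Notation F := (Fm ar).

Definition consequence (vd : (F -> Prop) -> F -> Prop) : Prop :=
  (forall (G : F -> Prop) phi, G phi -> vd G phi) /\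
  (forall (G D : F -> Prop) phi, (forall x, G x -> D x) -> vd G phi -> vd D phi) /\
  (forall (G D : F -> Prop) phi,
      (forall psi, D psi -> vd G psi) -> vd (fun x => G x \/ D x) phi -> vd G phi).

Definition sing (phi : F) : F -> Prop := fun x => x = phi.
Definition pair (phi psi : F) : F -> Prop := fun x => x = phi \/ x = psi.

Definition trivial_set (vd : (F -> Prop) -> F -> Prop) (G : F -> Prop) : Prop :=
  forall chi, vd G chi.

Definition selfextensional (vd : (F -> Prop) -> F -> Prop) : Prop :=
  forall phi psi, vd (sing phi) psi -> vd (sing psi) phi ->
  forall (delta : F) (p : nat),
    vd (sing (fsubst phi p delta)) (fsubst psi p delta) /\
    vd (sing (fsubst psi p delta)) (fsubst phi p delta).

(** The unary term  neg  is given by a formula [nt] in the variable [q]: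
    neg phi := nt(phi/q). *)
Definition negW (vd : (F -> Prop) -> F -> Prop) (neg : F -> F) : Prop :=
  forall phi psi, vd (sing phi) psi -> vd (sing (neg psi)) (neg phi).
Definition negA (vd : (F -> Prop) -> F -> Prop) (neg : F -> F) : Prop :=
  forall phi, trivial_set vd (pair phi (neg phi)).
Definition negS (vd : (F -> Prop) -> F -> Prop) (neg : F -> F) : Prop :=
  forall phi psi, trivial_set vd (pair phi psi) -> vd (sing phi) (neg psi).

Definition closed_WO (vd : (F -> Prop) -> F -> Prop) (N : F -> F -> Prop) : Prop :=
  forall alpha phi psi, N alpha phi -> vd (sing phi) psi -> N alpha psi.

Definition negperm (vd : (F -> Prop) -> F -> Prop) (N : F -> F -> Prop)
  (alpha phi : F) : Prop :=
  forall psi, N alpha psi -> ~ trivial_set vd (pair phi psi).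

End Logic.


(* If (alpha, ~phi) were in N, then by neg_A it would be a norm inconsistent
   with phi, so phi is not negatively permitted.  Conversely, a norm psi
   inconsistent with phi satisfies psi |- ~phi by neg_S, and closure under
   (WO) would then put (alpha, ~phi) into N. *)

Section NegativePermission.

Context {Op : Type} {ar : Op -> nat}.
Variable vd : (Fm ar -> Prop) -> Fm ar -> Prop.
Hypothesis vd_consequence : consequence vd.

Lemma trivial_set_pairC {phi psi : Fm ar} :
  trivial_set vd (pair phi psi) -> trivial_set vd (pair psi phi).
Proof.
  destruct vd_consequence as [_ [vd_mono _]].
  intros Htriv chi. apply (vd_mono (pair phi psi)); [|apply Htriv].
  intros x [-> | ->]; [right | left]; reflexivity.
Qed.

Variable neg : Fm ar -> Fm ar.

Lemma negS_pairC {phi psi : Fm ar} :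
  negS vd neg -> trivial_set vd (pair phi psi) -> vd (sing psi) (neg phi).
Proof.
  intros HS Htriv. apply HS, trivial_set_pairC, Htriv.
Qed.

Variable N : Fm ar -> Fm ar -> Prop.

Lemma negperm_not_N_neg (alpha phi : Fm ar) :
  negA vd neg -> negperm vd N alpha phi -> ~ N alpha (neg phi).
Proof.
  intros HA HP HN. exact (HP _ HN (HA phi)).
Qed.

Lemma not_N_neg_negperm (alpha phi : Fm ar) :
  negS vd neg -> closed_WO vd N -> ~ N alpha (neg phi) -> negperm vd N alpha phi.
Proof.
  intros HS HWO HnN psi HN Htriv.
  apply HnN, (HWO alpha psi); [exact HN | exact (negS_pairC HS Htriv)].
Qed.

Lemma negpermE (alpha phi : Fm ar) :
  negS vd neg -> negA vd neg -> closed_WO vd N ->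
  negperm vd N alpha phi <-> ~ N alpha (neg phi).
Proof.
  intros HS HA HWO. split.
  - exact (negperm_not_N_neg alpha phi HA).
  - exact (not_N_neg_negperm alpha phi HS HWO).
Qed.

End NegativePermission.

Theorem proposition4p2 (Op : Type) (ar : Op -> nat)
  (vd : (Fm ar -> Prop) -> Fm ar -> Prop)
  (nt : Fm ar) (q : nat)
  (N : Fm ar -> Fm ar -> Prop) :
  consequence vd ->
  selfextensional vd ->
  negW vd (fun phi => fsubst phi q nt) ->
  negS vd (fun phi => fsubst phi q nt) ->
  negA vd (fun phi => fsubst phi q nt) ->
  closed_WO vd N ->
  forall alpha phi : Fm ar,
    negperm vd N alpha phi <-> ~ N alpha (fsubst phi q nt).
Proof.
  intros Hcons _ _ HS HA HWO alpha phi.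
  exact (negpermE vd Hcons (fun chi => fsubst chi q nt) N alpha phi HS HA HWO).
Qed.
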